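(* Let $r$ be a fixed positive integer, $n\ge3$, and let $V$ be a symmetric $n\times n$ matrix in $\mathcal L_n(1/b_n,1/c_n)$ with $b_n\ge c_n>0$. Let $S=\mathrm{diag}(1/v_{11},\dots,1/v_{nn})$, $W=V^{-1}-S$, and let $W_{22}$ be the bottom-right $(n-r)\times(n-r)$ block of $W$. Let $V_{22}$ be the bottom-right $(n-r)\times(n-r)$ block of $V$, $S_{22}=\mathrm{diag}(1/v_{r+1,r+1},\dots,1/v_{nn})$ and $\widetilde W_{22}=V_{22}^{-1}-S_{22}$. Then there is a constant $C$ depending only on $r$ such that for all sufficiently large $n$, $$\|W_{22}-\widetilde W_{22}\|_{\max}\le C\frac{b_n^6}{n^3c_n^5}.$$
   Context: For $m,M>0$, $\mathcal L_n(m,M)$ is the class of $n\times n$ matrices $V=(v_{ij})$ with $v_{ii}=\sum_{j\ne i}v_{ij}$ for $i=1,\dots,n$ and $m\le v_{ij}\le M$ for all $i\ne j$. $\|J\|_{\max}=\max_{i,j}|J_{ij}|$. *)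

From HB Require Import structures.
From mathcomp Require Import all_boot all_order all_algebra.
Set Implicit Arguments. Unset Strict Implicit. Unset Printing Implicit Defensive.
Import Order.TTheory GRing.Theory Num.Theory.
Local Open Scope ring_scope.

Definition inL (R : realFieldType) (n : nat) (m M : R) (V : 'M[R]_n) : Prop :=
  (forall i : 'I_n, V i i = \sum_(j < n | j != i) V i j) /\
  (forall i j : 'I_n, i != j -> m <= V i j <= M).

Definition maxnorm (R : realFieldType) (p q : nat) (J : 'M[R]_(p, q)) : R :=
  \big[Num.max/0]_(i < p) \big[Num.max/0]_(j < q) `|J i j|.

(* index i of the bottom-right (n-r)x(n-r) block, seen as index r+i of 'I_n *)
Definition shift_ord (r n : nat) (i : 'I_(n - r)) : 'I_n :=
  Ordinal (eq_ind _ is_true (ltn_ord i) _ (ltn_subRL r i n)).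
Arguments shift_ord : clear implicits.

Definition br_block (R : Type) (r n : nat) (A : 'M[R]_n) : 'M[R]_(n - r) :=
  \matrix_(i, j) A (shift_ord r n i) (shift_ord r n j).

Definition invdiag (R : realFieldType) (n : nat) (A : 'M[R]_n) : 'M[R]_n :=
  diag_mx (\row_i (A i i)^-1).

From HB Require Import structures.
From mathcomp Require Import all_boot all_order all_algebra.
From mathcomp Require Import ring lra zify.
Import Order.TTheory GRing.Theory Num.Theory.
Set Implicit Arguments. Unset Strict Implicit. Unset Printing Implicit Defensive.
Local Open Scope ring_scope.

(* Write P = V^-1 and Q = V22^-1.  The diagonal corrections agree on the block,
   so W22 - W~22 = P22 - Q.  If E embeds the block coordinates and
   G = V E Q - E, then G vanishes on the block rows and P22 - Q = -(P G)22:
   every entry is a sum, over the r indices outside the block, of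
   off-diagonal entries of P against the corresponding entries of G.

   Two estimates finish the proof (a <= v_ij <= b off the diagonal).  Away
   from k, the column P(., k) is minus a weighted average of its other
   entries; comparing its largest and smallest entries off k shows that the
   off-diagonal entries of P are O(b^2 / (n^2 a^3)).  For z = (P G)(., i),
   z^T V z only involves the r outside coordinates, while diagonal dominance
   gives |V z|^2 <= 2 (max_j v_jj) z^T V z; with Cauchy-Schwarz this bounds
   the l1 norm of those r entries of G by 2 r (n - 1) b times the
   off-diagonal bound on P. *)

Lemma sum_delta_mul (R : nzRingType) (I : finType) (a : I) (F : I -> R) :
  \sum_k (k == a)%:R * F k = F a.
Proof.
rewrite (bigD1 a) //= eqxx mul1r big1 ?addr0 // => k /negPf->.
by rewrite mul0r.
Qed.

Lemma sumr_neq_const (R : nzRingType) n (i : 'I_n) (c : R) :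
  \sum_(j | j != i) c = (n%:R - 1) * c.
Proof.
rewrite (eq_bigl (mem (predC1 i))) // sumr_const cardC1 card_ord.
by case: n i => [[] //|n i] /=; rewrite -natr1 addrK mulr_natl.
Qed.

Lemma sum_offdiag (R : zmodType) n (f : 'I_n -> 'I_n -> R) :
  \sum_i \sum_(j | j != i) f i j = \sum_i \sum_j f i j - \sum_i f i i.
Proof.
rewrite -sumrB; apply: eq_bigr => i _.
by rewrite [X in _ = X - _](bigD1 i) //= (addrC (f i i)) addrK.
Qed.

Lemma weighted_cauchy_schwarz (R : realFieldType) (I : finType) (P : pred I)
    (w t : I -> R) :
  (forall i, P i -> 0 <= w i) ->
  (\sum_(i | P i) w i * t i) ^+ 2
    <= (\sum_(i | P i) w i) * \sum_(i | P i) w i * t i ^+ 2.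
Proof.
move=> w_ge0.
have sq_ge0 : 0 <= \sum_(i | P i) \sum_(j | P j) w i * w j * (t i - t j) ^+ 2.
  apply: sumr_ge0 => i Pi; apply: sumr_ge0 => j Pj.
  by rewrite mulr_ge0 ?sqr_ge0 // mulr_ge0 // w_ge0.
have expand : \sum_(i | P i) \sum_(j | P j) w i * w j * (t i - t j) ^+ 2 =
    \sum_(i | P i) \sum_(j | P j) (w i * t i ^+ 2) * w j
  + \sum_(i | P i) \sum_(j | P j) w i * (w j * t j ^+ 2)
  - 2 * \sum_(i | P i) \sum_(j | P j) (w i * t i) * (w j * t j).
  rewrite mulr_sumr -big_split -sumrB; apply: eq_bigr => i _.
  rewrite mulr_sumr -big_split -sumrB; apply: eq_bigr => j _ /=; ring.
rewrite expand -!big_distrlr /= in sq_ge0.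
rewrite expr2; lra.
Qed.

Lemma sqr_sum_le_card (R : realFieldType) (I : finType) (A : {pred I}) (t : I -> R) :
  (\sum_(i in A) t i) ^+ 2 <= #|A|%:R * \sum_(i in A) t i ^+ 2.
Proof.
have := @weighted_cauchy_schwarz R I (fun i => i \in A) (fun _ => 1) t (fun _ _ => ler01).
have mul1_sum (F : I -> R) : \sum_(i in A) 1 * F i = \sum_(i in A) F i.
  by apply: eq_bigr => i _; rewrite mul1r.
by rewrite !mul1_sum sumr_const.
Qed.

Definition quad_form (R : nzRingType) n (A : 'M[R]_n) (y : 'I_n -> R) : R :=
  \sum_i y i * \sum_j A i j * y j.

Definition extend (R : nzRingType) m n (s : 'I_m -> 'I_n) (u : 'I_m -> R)
    (k : 'I_n) : R :=
  \sum_l (k == s l)%:R * u l.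

Section Extend.
Variables (R : comNzRingType) (m n : nat) (s : 'I_m -> 'I_n).

Lemma sum_extend_mul (u : 'I_m -> R) (F : 'I_n -> R) :
  \sum_k extend s u k * F k = \sum_l u l * F (s l).
Proof.
under eq_bigr do rewrite /extend mulr_suml.
rewrite exchange_big /=; apply: eq_bigr => l _.
rewrite -(sum_delta_mul (s l) (fun k => u l * F k)).
by apply: eq_bigr => k _; rewrite mulrA.
Qed.

Lemma quad_form_mxsub (A : 'M[R]_n) (u : 'I_m -> R) :
  quad_form (mxsub s s A) u = quad_form A (extend s u).
Proof.
rewrite /quad_form sum_extend_mul; apply: eq_bigr => l _; congr (_ * _).
rewrite (eq_bigr (fun j => extend s u j * A (s l) j)) => [|j _]; last exact: mulrC.
by rewrite sum_extend_mul; apply: eq_bigr => l' _; rewrite mxE mulrC.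
Qed.

Hypothesis s_inj : injective s.

Lemma extend_inj (u : 'I_m -> R) l : extend s u (s l) = u l.
Proof.
rewrite /extend -(sum_delta_mul l u); apply: eq_bigr => l' _.
by rewrite (inj_eq s_inj) eq_sym.
Qed.

Lemma sum_sqr_extend (u : 'I_m -> R) :
  \sum_k extend s u k ^+ 2 = \sum_l u l ^+ 2.
Proof.
under eq_bigr do rewrite expr2.
by rewrite sum_extend_mul; apply: eq_bigr => l _; rewrite extend_inj expr2.
Qed.

End Extend.

Lemma quad_form_mxsub_ge (R : realFieldType) m n (s : 'I_m -> 'I_n)
    (A : 'M[R]_n) (c : R) :
  injective s -> (forall y, c * \sum_i y i ^+ 2 <= quad_form A y) ->
  forall u, c * \sum_l u l ^+ 2 <= quad_form (mxsub s s A) u.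
Proof.
by move=> s_inj A_ge u; rewrite quad_form_mxsub -(sum_sqr_extend s_inj).
Qed.

Lemma unitmx_quad_form_ge (R : realFieldType) n (A : 'M[R]_n) (c : R) :
  0 < c -> (forall y, c * \sum_i y i ^+ 2 <= quad_form A y) -> A \in unitmx.
Proof.
move=> c_gt0 A_ge; rewrite -unitmx_tr unitmxE unitfE.
apply/det0P => -[v /negP v_neq0 vA0]; apply: v_neq0.
set y := fun j => v ord0 j.
have qf0 : quad_form A y = 0.
  rewrite /quad_form big1 // => i _.
  have := congr1 (fun B : 'M_(1, n) => B ord0 i) vA0; rewrite !mxE => vAi.
  suff -> : \sum_j A i j * y j = 0 by rewrite mulr0.
  by rewrite -[RHS]vAi; apply: eq_bigr => j _; rewrite mxE mulrC.
have sum0 : \sum_i y i ^+ 2 = 0.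
  apply/eqP; rewrite eq_le sumr_ge0 ?andbT => [|i _]; last exact: sqr_ge0.
  by rewrite -(pmulr_rle0 _ c_gt0) -[X in _ <= X]qf0 A_ge.
apply/eqP/matrixP => i j; rewrite [i]ord1 mxE; apply/eqP; rewrite -sqrf_eq0.
by apply/eqP/(psumr_eq0P _ sum0) => // k _; apply: sqr_ge0.
Qed.

(* [colsub s 1%:M] is the embedding of the block coordinates into 'I_n. *)
Definition block_residual (R : comUnitRingType) m n (s : 'I_m -> 'I_n)
    (V : 'M[R]_n) : 'M[R]_(n, m) :=
  V *m (colsub s 1%:M *m invmx (mxsub s s V)) - colsub s 1%:M.

Section BlockInverse.
Variables (R : comUnitRingType) (m n : nat) (s : 'I_m -> 'I_n) (V : 'M[R]_n).
Hypotheses (s_inj : injective s) (V_unit : V \in unitmx)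
  (Vs_unit : mxsub s s V \in unitmx).

Lemma mxsub1_inj : mxsub s s 1%:M = 1%:M :> 'M[R]_m.
Proof. by apply/matrixP => i j; rewrite !mxE (inj_eq s_inj). Qed.

Lemma rowsub_block_residual : rowsub s (block_residual s V) = 0.
Proof.
rewrite raddfB /= mulmxA -!mul_rowsub_mx mulmx_colsub mulmx1 -mxsubrc.
by rewrite -mxsubcr mulmxV // mxsub1_inj subrr.
Qed.

Lemma mxsub_invmx_sub :
  mxsub s s (invmx V) - invmx (mxsub s s V)
    = - rowsub s (invmx V *m block_residual s V).
Proof.
rewrite mulmxBr mulmxA mulVmx // mul1mx raddfB opprB /=.
congr (_ - _); first by rewrite mulmx_colsub mulmx1 -mxsubrc.
by rewrite -mul_rowsub_mx -mxsubrc mxsub1_inj mul1mx.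
Qed.

Lemma invmx_block_residual_out k i :
  k \notin codom s ->
  (invmx V *m block_residual s V) k i = - invmx V k (s i).
Proof.
move=> k_out; rewrite mulmxBr mulmxA mulVmx // mul1mx mulmx_colsub mulmx1 !mxE.
rewrite big1 ?sub0r // => l _; rewrite !mxE.
suff /negPf-> : k != s l by rewrite mulr0n mul0r.
by apply: contraNneq k_out => ->; apply: codom_f.
Qed.

End BlockInverse.

Lemma ler_mul_norm (R : realDomainType) (p q P Q : R) :
  `|p| <= P -> `|q| <= Q -> p * q <= P * Q.
Proof.
move=> hp hq; apply: le_trans (ler_norm _) _; rewrite normrM.
by apply: ler_pM => //; apply: normr_ge0.
Qed.

Section NegativeAverage.
Variables (R : realFieldType) (n : nat) (x : 'I_n -> R) (w : 'I_n -> 'I_n -> R).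
Variables (k : 'I_n) (rho wb L : R).
Hypotheses (n_ge3 : (3 <= n)%N) (rho_ge0 : 0 <= rho).
Hypothesis x_eq : forall i, i != k -> x i = - \sum_(j | j != i) w i j * x j.
Hypothesis w_sum1 : forall i, \sum_(j | j != i) w i j = 1.
Hypothesis w_bounds : forall i j, i != j -> rho <= w i j <= wb.
Hypothesis x_bound : forall l, `|x l| <= L.

Lemma sum_w_out i : i != k -> \sum_(j | (j != i) && (j != k)) w i j = 1 - w i k.
Proof. by move=> ik; rewrite -(w_sum1 i) [X in _ = X - _](bigD1 k) 1?eq_sym //=; lra. Qed.

Section Extremes.
Variables imax imin : 'I_n.
Hypotheses (imax_k : imax != k) (imin_k : imin != k).
Hypothesis x_le_max : forall j, j != k -> x j <= x imax.
Hypothesis x_ge_min : forall j, j != k -> x imin <= x j.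

Let u j := x j - x imin.
Let D := x imax - x imin.
Let T i := \sum_(j | (j != i) && (j != k)) w i j * u j.
Let S i := \sum_(j | (j != i) && (j != k)) u j.

Lemma u_range j : j != k -> 0 <= u j <= D.
Proof. by move=> jk; rewrite /u /D subr_ge0 lerD2r x_ge_min ?x_le_max. Qed.

Lemma norm_u_k : `|u k| <= 2 * L.
Proof.
apply: le_trans (ler_normB _ _) _.
by rewrite mulr2n mulrDl mul1r lerD ?x_bound.
Qed.

Lemma extreme_eq i : i != k -> x i + x imin = - (w i k * u k + T i).
Proof.
move=> ik; rewrite /T -(bigD1 k) 1?eq_sym //=.
have -> : \sum_(j | j != i) w i j * u j = \sum_(j | j != i) w i j * x j - x imin.
  under eq_bigr do rewrite /u mulrBr.
  by rewrite sumrB -mulr_suml w_sum1 mul1r.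
by rewrite (x_eq ik) opprB addrC.
Qed.

Lemma T_ge i : i != k -> rho * S i <= T i.
Proof.
move=> ik; rewrite mulr_sumr; apply: ler_sum => j /andP[ji jk].
have /andP[rho_le _] : rho <= w i j <= wb by apply: w_bounds; rewrite eq_sym.
by apply: ler_wpM2r => //; case/andP: (u_range jk).
Qed.

Lemma T_le i : i != k -> T i <= rho * S i + (1 - w i k - (n%:R - 2) * rho) * D.
Proof.
move=> ik.
have card_out : \sum_(j | (j != i) && (j != k)) rho = (n%:R - 2) * rho.
  by have := sumr_neq_const i rho; rewrite (bigD1 k) 1?eq_sym //=; lra.
rewrite -(sum_w_out ik) -card_out -sumrB mulr_suml mulr_sumr -big_split.
apply: ler_sum => j /andP[ji jk] /=.
have /andP[rho_le _] : rho <= w i j <= wb by apply: w_bounds; rewrite eq_sym.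
have /andP[u_ge0 u_le] := u_range jk.
have : (w i j - rho) * u j <= (w i j - rho) * D by apply: ler_wpM2l; lra.
lra.
Qed.

Lemma S_le i : i != k -> S i <= (n%:R - 2) * D.
Proof.
move=> ik; have := sumr_neq_const i D; rewrite (bigD1 k) 1?eq_sym //= => sumD.
have : S i <= \sum_(j | (j != i) && (j != k)) D.
  by apply: ler_sum => j /andP[_ jk]; case/andP: (u_range jk).
lra.
Qed.

Lemma S_imin_sub : S imin - S imax = D.
Proof.
have split_at j : j != k -> \sum_(l | l != k) u l = u j + S j.
  by move=> jk; rewrite (bigD1 j) //=; congr (_ + _); apply: eq_bigl => l; rewrite andbC.
have := split_at _ imax_k; rewrite (split_at _ imin_k) /u /D subrr; lra.
Qed.

Lemma w_k_range i : i != k -> 0 <= w i k <= wb.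
Proof. by move=> /w_bounds /andP[rho_le ->]; rewrite (le_trans rho_ge0 rho_le). Qed.

Lemma spread_le : (n%:R - 3) * rho * D <= 2 * wb * L.
Proof.
have := extreme_eq imax_k; have := extreme_eq imin_k.
have := T_ge imax_k; have := T_le imin_k; have := S_imin_sub.
have /andP[wM0 wMb] := w_k_range imax_k; have /andP[wm0 wmb] := w_k_range imin_k.
have D_ge0 : 0 <= D by case/andP: (u_range imax_k).
have : 0 <= w imin k * D by apply: mulr_ge0.
have : (w imin k - w imax k) * u k <= wb * (2 * L).
  by apply: ler_mul_norm; rewrite ?norm_u_k // ler_norml; apply/andP; split; lra.
rewrite /D; nra.
Qed.

Lemma midrange_le : `|x imax + x imin| <= 2 * wb * L.
Proof.
have := extreme_eq imax_k; have := extreme_eq imin_k.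
have := T_ge imax_k; have := T_le imin_k.
have : rho * S imin <= rho * ((n%:R - 2) * D) by apply: ler_wpM2l; last exact: S_le.
have /andP[wM0 wMb] := w_k_range imax_k; have /andP[wm0 wmb] := w_k_range imin_k.
have S_ge0 : 0 <= rho * S imax.
  by apply: mulr_ge0 => //; apply: sumr_ge0 => j /andP[_ jk]; case/andP: (u_range jk).
have : 0 <= w imin k * D by apply: mulr_ge0 => //; case/andP: (u_range imax_k).
have : - (w imax k * u k) <= wb * (2 * L).
  by rewrite -mulNr; apply: ler_mul_norm; rewrite ?norm_u_k // normrN ger0_norm.
have : w imin k * u k <= wb * (2 * L).
  by apply: ler_mul_norm; rewrite ?norm_u_k // ger0_norm.
rewrite ler_norml /D => *; apply/andP; split; nra.
Qed.

End Extremes.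

Lemma neg_average_bound i : i != k -> (n%:R - 3) * rho * `|x i| <= 2 * wb * L.
Proof.
move=> ik.
case: (@arg_maxP _ _ _ i (fun j => j != k) x ik) => imax imax_k x_le_max.
case: (@arg_minP _ _ _ i (fun j => j != k) x ik) => imin imin_k x_ge_min.
have spread := spread_le imax_k imin_k x_le_max x_ge_min.
have mid := midrange_le imax_k imin_k x_le_max x_ge_min.
have q_ge0 : 0 <= (n%:R - 3) * rho by rewrite mulr_ge0 // subr_ge0 ler_nat.
have q_le1 : (n%:R - 3) * rho <= 1.
  have : \sum_(j | j != i) rho <= 1.
    rewrite -(w_sum1 i); apply: ler_sum => j ji.
    by have /andP[] : rho <= w i j <= wb by apply: w_bounds; rewrite eq_sym.
  by rewrite sumr_neq_const; apply: le_trans; apply: ler_wpM2r => //; lra.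
have wbL_ge0 : 0 <= wb * L.
  have /andP[rho_le w_le] := w_bounds ik.
  by rewrite mulr_ge0 ?(le_trans (normr_ge0 _) (x_bound i)) //; move: rho_ge0; lra.
have x_mid : 2 * `|x i| <= x imax - x imin + `|x imax + x imin|.
  have /= := x_le_max _ ik; have /= := x_ge_min _ ik.
  have /andP[] : - `|x imax + x imin| <= x imax + x imin <= `|x imax + x imin|.
    by rewrite -ler_norml.
  by case: (lerP 0 (x i)) => [/ger0_norm|/ltr0_norm]->; lra.
nra.
Qed.

End NegativeAverage.

Lemma mulmxV_entry (R : comUnitRingType) n (A : 'M[R]_n) i k :
  A \in unitmx -> \sum_j A i j * invmx A j k = (i == k)%:R.
Proof.
by move=> A_unit; have := congr1 (fun B : 'M[R]_n => B i k) (mulmxV A_unit); rewrite !mxE.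
Qed.

Section BalancedMatrix.
Variables (R : realFieldType) (n : nat) (V : 'M[R]_n) (a b : R).
Hypothesis V_sym : forall i j, V i j = V j i.
Hypothesis V_diag : forall i, V i i = \sum_(j | j != i) V i j.
Hypothesis V_off : forall i j, i != j -> a <= V i j <= b.
Hypotheses (a_gt0 : 0 < a) (n_ge3 : (3 <= n)%N).

Lemma row_mul_offdiag (y : 'I_n -> R) i :
  \sum_j V i j * y j = \sum_(j | j != i) V i j * (y i + y j).
Proof.
rewrite (bigD1 i) //= V_diag mulr_suml -big_split /=.
by apply: eq_bigr => j _; rewrite mulrDr.
Qed.

Lemma quad_form_offdiag (y : 'I_n -> R) :
  2 * quad_form V y = \sum_i \sum_(j | j != i) V i j * (y i + y j) ^+ 2.
Proof.
have row_i : quad_form V y = \sum_i \sum_(j | j != i) V i j * (y i * (y i + y j)).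
  apply: eq_bigr => i _; rewrite row_mul_offdiag mulr_sumr.
  by apply: eq_bigr => j _; ring.
have row_j : quad_form V y = \sum_i \sum_(j | j != i) V i j * (y j * (y i + y j)).
  rewrite row_i (exchange_big_dep xpredT) //=; apply: eq_bigr => j _.
  rewrite (eq_bigl (fun i => i != j)) => [|i]; last by rewrite eq_sym.
  by apply: eq_bigr => i _; rewrite V_sym; ring.
rewrite mulr2n mulrDl mul1r {1}row_i row_j -big_split; apply: eq_bigr => i _ /=.
by rewrite -big_split; apply: eq_bigr => j _ /=; ring.
Qed.

Lemma diag_bounds i : (n%:R - 1) * a <= V i i <= (n%:R - 1) * b.
Proof.
rewrite V_diag -!(sumr_neq_const i); apply/andP; split; apply: ler_sum => j ji;
  by have /andP[] : a <= V i j <= b by apply: V_off; rewrite eq_sym.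
Qed.

Lemma quad_form_ge (y : 'I_n -> R) :
  a * (n%:R - 2) * \sum_i y i ^+ 2 <= quad_form V y.
Proof.
have pairs_le : a * \sum_i \sum_(j | j != i) (y i + y j) ^+ 2 <= 2 * quad_form V y.
  rewrite quad_form_offdiag mulr_sumr; apply: ler_sum => i _.
  rewrite mulr_sumr; apply: ler_sum => j ji.
  have /andP[a_le _] : a <= V i j <= b by apply: V_off; rewrite eq_sym.
  by apply: ler_wpM2r; rewrite ?sqr_ge0.
have pairsE : \sum_i \sum_(j | j != i) (y i + y j) ^+ 2 =
    (2 * n%:R - 4) * \sum_i y i ^+ 2 + 2 * (\sum_i y i) ^+ 2.
  rewrite sum_offdiag.
  have -> : \sum_(i < n) \sum_(j < n) (y i + y j) ^+ 2 =
      \sum_(i < n) \sum_(j < n) (y i ^+ 2 * 1) + \sum_(i < n) \sum_(j < n) (1 * y j ^+ 2)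
      + 2 * \sum_(i < n) \sum_(j < n) (y i * y j).
    rewrite mulr_sumr -!big_split; apply: eq_bigr => i _ /=.
    by rewrite mulr_sumr -!big_split; apply: eq_bigr => j _ /=; ring.
  rewrite -!big_distrlr /= sumr_const card_ord.
  have -> : \sum_(i < n) (y i + y i) ^+ 2 = 4 * \sum_(i < n) y i ^+ 2.
    by rewrite mulr_sumr; apply: eq_bigr => i _; ring.
  by rewrite -mulr_natl expr2; ring.
have : 0 <= a * (2 * (\sum_i y i) ^+ 2).
  by apply: mulr_ge0; [exact: ltW | rewrite mulr_ge0 ?sqr_ge0].
move: pairs_le; rewrite pairsE; nra.
Qed.

Lemma sum_sqr_row_le (z : 'I_n -> R) :
  \sum_i (\sum_j V i j * z j) ^+ 2 <= 2 * ((n%:R - 1) * b) * quad_form V z.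
Proof.
rewrite -mulrA mulrCA quad_form_offdiag mulr_sumr; apply: ler_sum => i _.
have V_ge0 j : j != i -> 0 <= V i j.
  move=> ji; have /andP[a_le _] : a <= V i j <= b by apply: V_off; rewrite eq_sym.
  exact: le_trans (ltW a_gt0) a_le.
rewrite row_mul_offdiag.
apply: le_trans (weighted_cauchy_schwarz (fun j => z i + z j) V_ge0) _.
apply: ler_wpM2r; first by apply: sumr_ge0 => j ji; rewrite mulr_ge0 ?sqr_ge0 ?V_ge0.
by rewrite -V_diag; case/andP: (diag_bounds i).
Qed.

Lemma coercivity_gt0 : 0 < a * (n%:R - 2).
Proof. by rewrite mulr_gt0 // subr_gt0 ltr_nat. Qed.

Lemma V_unit : V \in unitmx.
Proof. exact: unitmx_quad_form_ge coercivity_gt0 quad_form_ge. Qed.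

Lemma invmx_entry_bound l k : `|invmx V l k| <= (a * (n%:R - 2))^-1.
Proof.
set c := a * (n%:R - 2); have c_gt0 : 0 < c := coercivity_gt0.
set x := fun j => invmx V j k.
have qf_x : quad_form V x = x k.
  rewrite /quad_form (eq_bigr (fun i => x i * (i == k)%:R)) => [|i _]; last first.
    by rewrite mulmxV_entry // V_unit.
  by rewrite (bigD1 k) //= eqxx mulr1 big1 ?addr0 // => i /negPf->; rewrite mulr0.
have x_le j : x j ^+ 2 <= \sum_i x i ^+ 2.
  by rewrite (bigD1 j) //= lerDl; apply: sumr_ge0 => i _; apply: sqr_ge0.
have c_sum_le : c * \sum_i x i ^+ 2 <= x k by rewrite -qf_x quad_form_ge.
have c_xk_le : c * x k <= 1.
  have : c * x k ^+ 2 <= x k := le_trans (ler_wpM2l (ltW c_gt0) (x_le k)) c_sum_le.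
  case: (ltrP 0 (x k)) => xk.
    by move=> h; rewrite -(ler_pM2r xk) mul1r -mulrA -expr2.
  by move=> _; apply: le_trans (ler_wpM2l (ltW c_gt0) xk) _; rewrite mulr0.
have : c * (c * x l ^+ 2) <= 1.
  apply: le_trans c_xk_le; apply: ler_wpM2l; first exact: ltW.
  exact: le_trans (ler_wpM2l (ltW c_gt0) (x_le l)) c_sum_le.
move=> cx_le; rewrite -(ler_pM2l c_gt0) divff ?lt0r_neq0 //.
have cx_ge0 : 0 <= c * `|x l| := mulr_ge0 (ltW c_gt0) (normr_ge0 _).
by rewrite -(expr_le1 (isT : (0 < 2)%N) cx_ge0) exprMn real_normK ?num_real // expr2 -mulrA.
Qed.

Lemma b_gt0 : 0 < b.
Proof.
have n_gt1 : (1 < n)%N by lia.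
have /andP[a_le le_b] := @V_off (Ordinal (ltnW n_gt1)) (Ordinal n_gt1) isT.
by apply: lt_le_trans le_b; apply: lt_le_trans a_le.
Qed.

Lemma invmx_offdiag_bound i k : (4 <= n)%N -> i != k ->
  `|invmx V i k| <= 2 * b ^+ 2 / (a ^+ 3 * ((n%:R - 2) * (n%:R - 3))).
Proof.
move=> n_ge4 ik.
have n1_gt0 : 0 < n%:R - 1 :> R by rewrite subr_gt0 ltr1n; lia.
have n2_gt0 : 0 < n%:R - 2 :> R by rewrite subr_gt0 ltr_nat; lia.
have n3_gt0 : 0 < n%:R - 3 :> R by rewrite subr_gt0 ltr_nat; lia.
have b_pos := b_gt0.
have Vjj_gt0 j : 0 < V j j.
  by case/andP: (diag_bounds j) => le_V _; apply: lt_le_trans le_V; apply: mulr_gt0.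
set rho := a / ((n%:R - 1) * b); set wb := b / ((n%:R - 1) * a).
have rho_gt0 : 0 < rho by rewrite divr_gt0 // mulr_gt0.
have x_eq j : j != k ->
    invmx V j k = - \sum_(l | l != j) V j l / V j j * invmx V l k.
  move=> jk; have := mulmxV_entry j k V_unit; rewrite (negbTE jk) (bigD1 j) //= => row0.
  have -> : \sum_(l | l != j) V j l / V j j * invmx V l k
      = (\sum_(l | l != j) V j l * invmx V l k) / V j j.
    by rewrite mulr_suml; apply: eq_bigr => l _; rewrite mulrAC.
  have -> : \sum_(l | l != j) V j l * invmx V l k = - (V j j * invmx V j k) by lra.
  by rewrite mulNr opprK mulrC mulKf // lt0r_neq0.
have w_sum1 j : \sum_(l | l != j) V j l / V j j = 1.
  by rewrite -mulr_suml -V_diag divff // lt0r_neq0.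
have w_bounds j l : j != l -> rho <= V j l / V j j <= wb.
  move=> jl; have /andP[a_le le_b] := V_off jl.
  have /andP[Vjj_ge Vjj_le] := diag_bounds j; have Vjj_pos := Vjj_gt0 j.
  apply/andP; split.
    rewrite ler_pdivlMr // mulrAC ler_pdivrMr; last exact: mulr_gt0.
    by apply: ler_pM; [exact: ltW | exact: ltW | done | done].
  rewrite ler_pdivrMr // mulrAC ler_pdivlMr; last exact: mulr_gt0.
  by apply: ler_pM; [exact: ltW (lt_le_trans a_gt0 a_le) | rewrite mulr_ge0 ?ltW |
    exact: le_b | exact: Vjj_ge].
have := neg_average_bound n_ge3 (ltW rho_gt0) x_eq w_sum1 w_bounds
  (fun l => invmx_entry_bound l k) ik.
have -> : 2 * b ^+ 2 / (a ^+ 3 * ((n%:R - 2) * (n%:R - 3)))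
    = 2 * wb * (a * (n%:R - 2))^-1 / ((n%:R - 3) * rho).
  by rewrite /wb /rho; field; rewrite !lt0r_neq0.
by move=> q_x_le; rewrite ler_pdivlMr 1?mulrC // mulr_gt0.
Qed.

Lemma sum_support_bound (K : {pred 'I_n}) (z : 'I_n -> R) (w : R) :
  0 <= w ->
  (forall k, k \notin K -> \sum_j V k j * z j = 0) ->
  (forall k, k \in K -> `|z k| <= w) ->
  \sum_(k in K) `|\sum_j V k j * z j| <= 2 * #|K|%:R * ((n%:R - 1) * b) * w.
Proof.
move=> w_ge0 g_out z_in.
set g := fun k => \sum_j V k j * z j; set S := \sum_(k in K) `|g k|.
set d := (n%:R - 1) * b.
have d_ge0 : 0 <= d by rewrite mulr_ge0 ?subr_ge0 ?ler1n ?(ltW b_gt0) //; lia.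
have S_ge0 : 0 <= S by apply: sumr_ge0 => k _; apply: normr_ge0.
have qf_le : quad_form V z <= w * S.
  rewrite /quad_form /S mulr_sumr [X in _ <= X]big_mkcond; apply: ler_sum => k _ /=.
  case: ifP => [kK|/negbT kK]; last by rewrite g_out // mulr0.
  apply: le_trans (ler_norm _) _.
  by rewrite normrM ler_wpM2r ?normr_ge0 ?z_in.
have cs : S ^+ 2 <= #|K|%:R * \sum_k g k ^+ 2.
  apply: le_trans (sqr_sum_le_card K (fun k => `|g k|)) _; rewrite ler_wpM2l ?ler0n //.
  rewrite [X in _ <= X](bigID (mem K)) /=.
  under eq_bigr do rewrite real_normK ?num_real //.
  by rewrite lerDl; apply: sumr_ge0 => k _; apply: sqr_ge0.
have : S ^+ 2 <= (2 * #|K|%:R * d * w) * S.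
  have -> : 2 * #|K|%:R * d * w * S = #|K|%:R * (2 * d * (w * S)) by ring.
  apply: le_trans cs _; apply: ler_wpM2l; first exact: ler0n.
  apply: le_trans (sum_sqr_row_le z) _.
  by apply: ler_wpM2l; [rewrite mulr_ge0 | exact: qf_le].
case: (ltrP 0 S) => [S_gt0|S_le0]; first by rewrite expr2 ler_pM2r.
have -> : S = 0 by apply/eqP; rewrite eq_le S_le0 S_ge0.
by move=> _; rewrite mulr_ge0 // mulr_ge0 // mulr_ge0 ?ler0n.
Qed.

Lemma mxsub_invmx_sub_bound m (s : 'I_m -> 'I_n) (w : R) :
  injective s -> 0 <= w -> (forall i k, i != k -> `|invmx V i k| <= w) ->
  forall j i, `|(mxsub s s (invmx V) - invmx (mxsub s s V)) j i|
    <= w * (2 * #|[predC codom s]|%:R * ((n%:R - 1) * b) * w).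
Proof.
move=> s_inj w_ge0 P_off j i.
have Vs_unit : mxsub s s V \in unitmx.
  exact: unitmx_quad_form_ge coercivity_gt0 (quad_form_mxsub_ge s_inj quad_form_ge).
rewrite mxsub_invmx_sub ?V_unit // mxE normrN !mxE.
set G := block_residual s V.
have G_in k : k \in codom s -> G k i = 0.
  case/codomP => l ->.
  have := congr1 (fun B : 'M_m => B l i) (rowsub_block_residual s_inj Vs_unit).
  by rewrite !mxE.
have V_PG k : \sum_j V k j * (invmx V *m G) j i = G k i.
  by have := congr1 (fun B : 'M_(n, m) => B k i) (mulKVmx V_unit G); rewrite mxE.
apply: le_trans (_ : w * \sum_(k in [predC codom s]) `|G k i| <= _).
  rewrite (bigID (mem (codom s))) /= big1 ?add0r => [|k /G_in->]; last by rewrite mulr0.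
  rewrite mulr_sumr; apply: le_trans (ler_norm_sum _ _ _) _; apply: ler_sum => k k_out.
  rewrite normrM ler_wpM2r ?normr_ge0 // P_off //.
  by apply: contraNneq k_out => <-; apply: codom_f.
apply: ler_wpM2l => //.
under eq_bigr do rewrite -V_PG.
apply: sum_support_bound => // k; rewrite inE ?negbK => k_in.
  by rewrite V_PG G_in.
rewrite invmx_block_residual_out ?V_unit // normrN P_off //.
by apply: contraNneq k_in => ->; apply: codom_f.
Qed.

End BalancedMatrix.

Lemma shift_ord_inj r n : injective (shift_ord r n).
Proof. by move=> i j /(congr1 val) /= /addnI /val_inj. Qed.

Lemma br_blockE (R : Type) r n (A : 'M[R]_n) :
  br_block r A = mxsub (shift_ord r n) (shift_ord r n) A.
Proof. by apply/matrixP => i j; rewrite !mxE. Qed.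

Lemma card_predC_codom m n (s : 'I_m -> 'I_n) :
  injective s -> #|[predC codom s]| = (n - m)%N.
Proof.
move=> s_inj; have := cardC (mem (codom s)); rewrite card_codom // !card_ord.
by change ((m + #|[predC codom s]|)%N = n -> #|[predC codom s]| = (n - m)%N); lia.
Qed.

Lemma mxsub_invdiag (R : realFieldType) m n (s : 'I_m -> 'I_n) (A : 'M[R]_n) :
  injective s -> mxsub s s (invdiag A) = invdiag (mxsub s s A).
Proof. by move=> s_inj; apply/matrixP => i j; rewrite !mxE (inj_eq s_inj). Qed.

Lemma rate_le (R : realFieldType) (N r b c : R) :
  6 <= N -> 0 <= r -> 0 < c -> c <= b ->
  2 * c^-1 ^+ 2 / (b^-1 ^+ 3 * ((N - 2) * (N - 3)))
    * (2 * r * ((N - 1) * c^-1) * (2 * c^-1 ^+ 2 / (b^-1 ^+ 3 * ((N - 2) * (N - 3)))))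
  <= 128 * r * (b ^+ 6 / (N ^+ 3 * c ^+ 5)).
Proof.
move=> N_ge6 r_ge0 c_gt0 c_le_b.
set w := 2 * c^-1 ^+ 2 / _.
have b_gt0 : 0 < b by apply: lt_le_trans c_le_b.
have N2_gt0 : 0 < N - 2 by lra.
have N3_gt0 : 0 < N - 3 by lra.
have N_gt0 : 0 < N by lra.
set X := r * b ^+ 6 / c ^+ 5.
have X_ge0 : 0 <= X by rewrite /X divr_ge0 ?mulr_ge0 ?exprn_ge0 // ltW.
have -> : w * (2 * r * ((N - 1) * c^-1) * w)
    = X * (8 * (N - 1) / ((N - 2) ^+ 2 * (N - 3) ^+ 2)).
  by rewrite /w /X; field; rewrite !lt0r_neq0.
have -> : 128 * r * (b ^+ 6 / (N ^+ 3 * c ^+ 5)) = X * (128 / N ^+ 3).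
  by rewrite /X; field; rewrite !lt0r_neq0.
apply: ler_wpM2l => //.
rewrite ler_pdivrMr ?mulr_gt0 ?exprn_gt0 // mulrAC ler_pdivlMr ?exprn_gt0 //.
have sq_le : N ^+ 2 <= 4 * ((N - 2) * (N - 3)) by nra.
have := ler_pM (sqr_ge0 N) (sqr_ge0 N) sq_le sq_le.
have : 0 <= N ^+ 3 by rewrite exprn_ge0 // ltW.
nra.
Qed.

Theorem lemma10 (R : realFieldType) (r : nat) (hr : (0 < r)%N) :
  exists C : R, forall b c : nat -> R,
    (forall n, 0 < c n /\ c n <= b n) ->
    exists N : nat, forall n : nat, (3 <= n)%N -> (N <= n)%N ->
      forall V : 'M[R]_n,
        V^T = V -> inL (b n)^-1 (c n)^-1 V ->
        let W := invmx V - invdiag V in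
        let V22 := br_block r V in
        let Wt22 := invmx V22 - invdiag V22 in
        maxnorm (br_block r W - Wt22)
          <= C * (b n ^+ 6 / ((n%:R) ^+ 3 * c n ^+ 5)).
Proof.
(* The statement also holds for r = 0. *)
exists (128 * r%:R) => b c bc; exists (r + 6)%N => n n_ge3 n_ge V V_tr [V_diag V_off].
have [c_gt0 c_le_b] := bc n; have b_gt0 := lt_le_trans c_gt0 c_le_b.
have a_gt0 : 0 < (b n)^-1 by rewrite invr_gt0.
have V_sym i j : V i j = V j i by rewrite -{1}V_tr mxE.
have n_ge4 : (4 <= n)%N by lia.
set s := shift_ord r n; have s_inj : injective s := @shift_ord_inj r n.
set w := 2 * (c n)^-1 ^+ 2 / ((b n)^-1 ^+ 3 * ((n%:R - 2) * (n%:R - 3))).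
have n2_gt0 : 0 < n%:R - 2 :> R by rewrite subr_gt0 (ltr_nat _ 2 n); lia.
have n3_gt0 : 0 < n%:R - 3 :> R by rewrite subr_gt0 (ltr_nat _ 3 n).
have w_ge0 : 0 <= w.
  by apply: divr_ge0; apply: mulr_ge0; rewrite ?mulr_ge0 ?exprn_ge0 ?invr_ge0 ?ltW.
have entry_le := mxsub_invmx_sub_bound V_sym V_diag V_off a_gt0 n_ge3 s_inj w_ge0
  (fun i k => invmx_offdiag_bound V_sym V_diag V_off a_gt0 n_ge3 n_ge4).
rewrite card_predC_codom // subKn in entry_le; last by lia.
have n_ge6 : 6 <= n%:R :> R by rewrite (ler_nat _ 6 n); lia.
have rate := rate_le n_ge6 (ler0n _ r) c_gt0 c_le_b.
cbv zeta; rewrite !br_blockE raddfB /= mxsub_invdiag // opprB addrA subrK.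
have bound_ge0 : 0 <= 128 * r%:R * (b n ^+ 6 / (n%:R ^+ 3 * c n ^+ 5)).
  apply: mulr_ge0; first by rewrite mulr_ge0 ?ler0n.
  by rewrite divr_ge0 ?mulr_ge0 ?exprn_ge0 ?ler0n ?ltW.
apply: bigmax_le => // j _; apply: bigmax_le => // i _.
exact: le_trans (entry_le j i) rate.
Qed.
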